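(* Let $p_n(\mathbf y)$ be a linear sequence of symmetric functions of binomial type, and let $\theta,\phi$ be shift-invariant linear operators on $\Lambda$. Then for every $n\ge0$, $$\epsilon\,\theta\phi\, p_n(\mathbf y)=\sum_{k=0}^n\binom nk\big(\epsilon\,\theta\, p_k(\mathbf y)\big)\big(\epsilon\,\phi\, p_{n-k}(\mathbf y)\big).$$
   Context: $\Lambda$ is the algebra of complex symmetric functions in $\mathbf y=(y_1,y_2,\dots)$. A linear sequence of symmetric functions of binomial type is $$p_n(\mathbf y)=\sum_{\lambda\vdash n}\frac{n!}{\prod_i\lambda_i!}\Big(\prod_ia_{\lambda_i}\Big)m_\lambda(\mathbf y)$$ for complex numbers $a_0=1,a_1\ne0,a_2,\dots$, where $m_\lambda$ is the monomial symmetric function. A linear operator $\theta$ on $\Lambda$ is shift-invariant if $E^a\theta=\theta E^a$ for all $a\in\mathbb C$, where $E^ap(y_1,y_2,\dots)=p(a,y_1,y_2,\dots)$. $\epsilon p=p(0,0,\dots)$. *)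

From HB Require Import structures.
From mathcomp Require Import all_boot all_order all_algebra.
From mathcomp Require Import complex.
From mathcomp Require Import Rstruct.
Set Implicit Arguments. Unset Strict Implicit. Unset Printing Implicit Defensive.
Import Order.TTheory GRing.Theory Num.Theory.
Local Open Scope ring_scope.

Definition CC : numClosedFieldType := (Rdefinitions.R)[i].

(* A symmetric function is represented by its evaluations at finitely many
   variables (y_1, ..., y_N, 0, 0, ...), given as a finite list y. *)
Definition symfun := seq CC -> CC.

Definition is_partition (n : nat) (l : seq nat) : bool :=
  [&& sorted geq l, all (fun i => 0 < i)%N l & sumn l == n].

Definition partitions (n : nat) : seq (seq nat) :=
  undup [seq l <- flatten [seq map (fun f : {ffun 'I_k -> 'I_n.+1} =>
                                        [seq val (f i) | i <- enum 'I_k])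
                                     (enum {ffun 'I_k -> 'I_n.+1})
                           | k <- iota 0 n.+1]
        | is_partition n l].

(* Monomial symmetric function m_lambda, evaluated at (y_1,...,y_N,0,...):
   sum of y^alpha over the distinct exponent vectors alpha whose nonzero
   entries are a rearrangement of lambda. *)
Definition msym (l : seq nat) : symfun := fun y =>
  \sum_(al : {ffun 'I_(size y) -> 'I_(sumn l).+1}
        | sort geq [seq val (al i) | i <- enum 'I_(size y) & val (al i) != 0%N] == l)
    \prod_(i < size y) (nth 0 y i) ^+ val (al i).

Definition inLambda (f : symfun) : Prop :=
  exists (s : seq (seq nat)) (c : seq nat -> CC),
    all (fun l => is_partition (sumn l) l) s /\
    f = fun y => \sum_(l <- s) c l * msym l y.

Definition Eshift (a : CC) (p : symfun) : symfun := fun y => p (a :: y).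

Definition epsilon (p : symfun) : CC := p [::].

Definition linear_on_Lambda (th : symfun -> symfun) : Prop :=
  (forall f, inLambda f -> inLambda (th f)) /\
  (forall (c : CC) f g, inLambda f -> inLambda g ->
     th (fun y => c * f y + g y) = (fun y => c * th f y + th g y)).

Definition shift_invariant (th : symfun -> symfun) : Prop :=
  forall (a : CC) f, inLambda f -> th (Eshift a f) = Eshift a (th f).

Definition binom_seq (a : nat -> CC) (n : nat) : symfun := fun y =>
  \sum_(l <- partitions n)
     ((n`!)%:R / \prod_(i <- l) (i`!)%:R) * (\prod_(i <- l) a i) * msym l y.

From HB Require Import structures.
From mathcomp Require Import all_boot all_order all_algebra.
From mathcomp Require Import complex Rstruct ring.
From Stdlib Require Import FunctionalExtensionality.
Set Implicit Arguments. Unset Strict Implicit. Unset Printing Implicit Defensive.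
Import GRing.Theory Num.Theory.
Local Open Scope ring_scope.

(* With A(t) = sum_j a_j t^j / j!, grouping the exponent vectors of the
   monomials by their partition gives p_n(y) = n! [t^n] prod_i A(y_i t), where
   a_0 = 1 accounts for the zero exponents and A may be truncated at degree n.
   This generating function is multiplicative over the variables, whence
   p_n(w, z) = sum_k C(n,k) p_(n-k)(w) p_k(z).  Iterating shift invariance gives
   (phi f)(y) = epsilon phi f(y, .); applied to f = p_n and expanded by linearity
   in z this yields phi p_n = sum_k C(n,k) (epsilon phi p_(n-k)) p_k, and it
   remains to apply theta and epsilon. *)

Definition ffun_partition {N M} (f : {ffun 'I_N -> 'I_M}) : seq nat :=
  sort geq [seq val (f i) | i <- enum 'I_N & val (f i) != 0%N].

Lemma msym_ffunE l m (y : seq CC) : sumn l = m ->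
  msym l y = \sum_(f : {ffun 'I_(size y) -> 'I_m.+1} | ffun_partition f == l)
               \prod_(i < size y) y`_i ^+ val (f i).
Proof. by move=> <-. Qed.

Lemma big_ffun_partition (R : Type) (idx : R) (op : Monoid.com_law idx)
    N M (f : {ffun 'I_N -> 'I_M}) (F : nat -> R) : F 0%N = idx ->
  \big[op/idx]_(j <- ffun_partition f) F j = \big[op/idx]_(i < N) F (f i).
Proof.
move=> F0; rewrite (perm_big _ (permEl (perm_sort _ _))) big_map big_filter.
rewrite big_mkcond big_enum; apply: eq_bigr => i _ /=.
by case: eqP => [->|].
Qed.

Lemma is_partition_ffun_partition N k (f : {ffun 'I_N -> 'I_k.+1}) :
  is_partition k (ffun_partition f) = (\sum_i val (f i) == k)%N.
Proof.
have geq_total : total geq by move=> x y; exact: leq_total.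
rewrite /is_partition sort_sorted // all_sort sumnE big_ffun_partition //=.
suff -> : all (fun i => 0 < i)%N [seq val (f i) | i <- enum 'I_N & val (f i) != 0%N].
  by [].
by apply/allP => x; case/mapP => i; rewrite mem_filter lt0n => /andP [fi_gt0 _] ->.
Qed.

Lemma size_le_sumn l : all (fun i => 0 < i)%N l -> (size l <= sumn l)%N.
Proof. by elim: l => //= h l IH /andP [h0 /IH]; rewrite -add1n; apply: leq_add. Qed.

Lemma nth_le_sumn l i : (nth 0%N l i <= sumn l)%N.
Proof.
elim: l i => [|h l IH] [|i] //=; first exact: leq_addr.
exact: leq_trans (IH i) (leq_addl _ _).
Qed.

Lemma mem_partitions n l : (l \in partitions n) = is_partition n l.
Proof.
rewrite /partitions mem_undup mem_filter andbC.
apply/andP/idP => [[]//| Hl]; split => //.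
have /and3P [_ pos /eqP sl] := Hl.
apply/flatten_mapP; exists (size l).
  by rewrite mem_iota add0n ltnS -sl size_le_sumn.
apply/mapP; exists [ffun i : 'I_(size l) => (inord (nth 0%N l i) : 'I_n.+1)].
  by rewrite mem_enum.
rewrite -[LHS](mkseq_nth 0%N) /mkseq -val_enum_ord -map_comp.
by apply: eq_map => i /=; rewrite ffunE inordK // ltnS -sl nth_le_sumn.
Qed.

Definition egf_poly (a : nat -> CC) M (b : CC) : {poly CC} :=
  \poly_(j < M.+1) (a j / j`!%:R * b ^+ j).

Definition egf_prod (a : nat -> CC) M (y : seq CC) : {poly CC} :=
  \prod_(b <- y) egf_poly a M b.

Lemma prod_scaleXn (I : Type) (r : seq I) (c : I -> CC) (e : I -> nat) :
  \prod_(i <- r) (c i *: 'X^(e i)) = (\prod_(i <- r) c i) *: 'X^(\sum_(i <- r) e i).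
Proof.
elim: r => [|h r IH]; first by rewrite !big_nil scale1r expr0.
by rewrite !big_cons IH -scalerAl -scalerAr scalerA exprD.
Qed.

Lemma coef_egf_prod a k y : (egf_prod a k y)`_k =
  \sum_(f : {ffun 'I_(size y) -> 'I_k.+1})
    (\prod_(i < size y) (a (f i) / (f i)`!%:R * y`_i ^+ f i))
      * (k == \sum_i val (f i))%:R.
Proof.
rewrite /egf_prod (big_nth 0) big_mkord /egf_poly.
under eq_bigr do rewrite poly_def.
rewrite bigA_distr_bigA coef_sum; apply: eq_bigr => f _.
by rewrite prod_scaleXn coefZ coefXn.
Qed.

Lemma partitions_uniq n : uniq (partitions n).
Proof. exact: undup_uniq. Qed.

Lemma binom_seq_egfE a k y : a 0%N = 1 ->
  binom_seq a k y = k`!%:R * (egf_prod a k y)`_k.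
Proof.
move=> a0; rewrite coef_egf_prod /binom_seq.
transitivity (\sum_(l <- partitions k)
   \sum_(f : {ffun 'I_(size y) -> 'I_k.+1} | ffun_partition f == l)
      k`!%:R * \prod_(i < size y) (a (f i) / (f i)`!%:R * y`_i ^+ f i)).
  rewrite big_seq [RHS]big_seq; apply: eq_bigr => l.
  rewrite mem_partitions => /and3P [_ _ /eqP sl].
  rewrite (msym_ffunE y sl) mulr_sumr; apply: eq_bigr => f /eqP <-.
  rewrite !big_ffun_partition // !big_split /= prodfV; ring.
rewrite mulr_sumr; under eq_bigr do rewrite big_mkcond.
rewrite exchange_big /=; apply: eq_bigr => f _.
rewrite -big_mkcond big_const_seq iter_addr_0.
rewrite (eq_count (eq_sym (ffun_partition f))) count_uniq_mem ?partitions_uniq //.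
by rewrite mem_partitions is_partition_ffun_partition eq_sym mulr_natr mulrnAr.
Qed.

Lemma coef_egf_poly a M b i : (egf_poly a M b)`_i =
  if (i < M.+1)%N then a i / i`!%:R * b ^+ i else 0.
Proof. exact: coef_poly. Qed.

Lemma coef_egf_prod_trunc a M k y i : (k <= M)%N -> (i <= k)%N ->
  (egf_prod a M y)`_i = (egf_prod a k y)`_i.
Proof.
move=> kM; rewrite /egf_prod; elim: y i => [|b y IH] i ik; first by rewrite !big_nil.
rewrite !big_cons !coefM; apply: eq_bigr => j _.
have ji : (j <= i)%N by rewrite -ltnS.
rewrite !coef_egf_poly !ltnS (leq_trans ji ik) (leq_trans (leq_trans ji ik) kM) IH //.
exact: leq_trans (leq_subr _ _) ik.
Qed.

Lemma binom_seq_cat a n w z : a 0%N = 1 ->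
  binom_seq a n (w ++ z) =
  \sum_(k < n.+1) 'C(n, k)%:R * binom_seq a (n - k) w * binom_seq a k z.
Proof.
move=> a0; rewrite binom_seq_egfE // /egf_prod big_cat /= (mulrC (\prod_(b <- w) _)).
rewrite coefM mulr_sumr.
apply: eq_bigr => k _; have kn : (k <= n)%N by rewrite -ltnS.
rewrite !binom_seq_egfE // -(coef_egf_prod_trunc a w (leq_subr k n) (leqnn _)).
rewrite -(coef_egf_prod_trunc a z kn (leqnn k)) -(bin_fact kn) !natrM; ring.
Qed.

Lemma inLambda_binom_seq_sum a m (c : nat -> CC) :
  inLambda (fun z => \sum_(k < m) c k * binom_seq a k z).
Proof.
exists (flatten [seq partitions k | k <- iota 0 m]).
exists (fun l => c (sumn l) * (sumn l)`!%:R / \prod_(i <- l) i`!%:R * \prod_(i <- l) a i).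
split.
  apply/allP => l /flatten_mapP [k _].
  by rewrite mem_partitions => Hl; have /and3P [_ _ /eqP ->] := Hl.
apply: functional_extensionality => z.
rewrite big_flatten /= big_map -val_enum_ord big_map big_enum /=.
apply: eq_bigr => k _; rewrite /binom_seq mulr_sumr.
rewrite [LHS]big_seq [RHS]big_seq; apply: eq_bigr => l.
by rewrite mem_partitions => /and3P [_ _ /eqP ->]; rewrite !mulrA.
Qed.

Lemma inLambda_binom_seq a m : inLambda (binom_seq a m).
Proof.
have -> : binom_seq a m = fun z => \sum_(k < m.+1) (k == m :> nat)%:R * binom_seq a k z.
  apply: functional_extensionality => z; rewrite big_ord_recr /= eqxx mul1r big1 ?add0r //.
  by move=> k _; rewrite /= ltn_eqF // mul0r.
exact: (inLambda_binom_seq_sum a m.+1 (fun k => (k == m)%:R)).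
Qed.

Lemma linear_on_Lambda0 th : linear_on_Lambda th -> th (fun _ => 0) = (fun _ => 0).
Proof.
case=> _ th_lin.
have Lambda0 : inLambda (fun _ => 0).
  exists [::], (fun _ => 0); split => //.
  by apply: functional_extensionality => y; rewrite big_nil.
have := th_lin 1 _ _ Lambda0 Lambda0.
have -> : (fun _ : seq CC => 1 * 0 + 0) = (fun _ => 0 : CC).
  by apply: functional_extensionality => y; rewrite mulr0 addr0.
move=> th0; apply: functional_extensionality => y.
have := congr1 (fun f => f y) th0; rewrite /= mul1r => th0y.
by apply: (addrI (th (fun _ => 0) y)); rewrite -th0y addr0.
Qed.

Lemma linear_binom_seq_sum th a m (c : nat -> CC) : linear_on_Lambda th ->
  th (fun z => \sum_(k < m) c k * binom_seq a k z) =
  fun y => \sum_(k < m) c k * th (binom_seq a k) y.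
Proof.
move=> th_lin; elim: m => [|m IH].
  have sum0 (F : seq CC -> 'I_0 -> CC) : (fun z => \sum_(k < 0) F z k) = fun _ => 0.
    by apply: functional_extensionality => z; rewrite big_ord0.
  by rewrite !sum0 linear_on_Lambda0.
have -> : (fun z => \sum_(k < m.+1) c k * binom_seq a k z) =
          fun z => c m * binom_seq a m z + \sum_(k < m) c k * binom_seq a k z.
  by apply: functional_extensionality => z; rewrite big_ord_recr addrC.
case: th_lin => _ ->; [|exact: inLambda_binom_seq|exact: inLambda_binom_seq_sum].
by rewrite IH; apply: functional_extensionality => y; rewrite big_ord_recr addrC.
Qed.

Lemma shift_invariant_epsilonE th f : shift_invariant th ->
  (forall w, inLambda (fun z => f (w ++ z))) ->
  forall y, th f y = epsilon (th (fun z => f (y ++ z))).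
Proof.
move=> th_shift + y; elim: y f => [|b y IH] f f_Lambda //.
rewrite -[th f _]/(Eshift b (th f) y) -th_shift; last exact: (f_Lambda [::]).
by rewrite IH // => w; exact: (f_Lambda (b :: w)).
Qed.

Lemma shift_invariant_binom_seqE ph a n :
  a 0%N = 1 -> linear_on_Lambda ph -> shift_invariant ph ->
  ph (binom_seq a n) = fun y =>
    \sum_(k < n.+1) 'C(n, k)%:R * epsilon (ph (binom_seq a (n - k))) * binom_seq a k y.
Proof.
move=> a0 ph_lin ph_shift; apply: functional_extensionality => y.
have catE w : (fun z => binom_seq a n (w ++ z)) =
    fun z => \sum_(k < n.+1) ('C(n, k)%:R * binom_seq a (n - k) w) * binom_seq a k z.
  by apply: functional_extensionality => z; rewrite binom_seq_cat.
have cat_Lambda w : inLambda (fun z => binom_seq a n (w ++ z)).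
  rewrite catE.
  exact: (inLambda_binom_seq_sum a n.+1 (fun k => 'C(n, k)%:R * binom_seq a (n - k) w)).
rewrite (shift_invariant_epsilonE ph_shift cat_Lambda) catE.
rewrite (linear_binom_seq_sum a n.+1 (fun k => 'C(n, k)%:R * binom_seq a (n - k) y) ph_lin).
rewrite /epsilon (reindex_inj rev_ord_inj) /=.
apply: eq_bigr => k _; have kn : (k <= n)%N by rewrite -ltnS.
by rewrite subSS subKn // bin_sub // mulrAC.
Qed.

Theorem mainTheorem11 (a : nat -> CC) (th ph : symfun -> symfun) (n : nat) :
  a 0%N = 1 -> a 1%N != 0 ->
  linear_on_Lambda th -> linear_on_Lambda ph ->
  shift_invariant th -> shift_invariant ph ->
  epsilon (th (ph (binom_seq a n))) =
  \sum_(k < n.+1)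
     ('C(n, k))%:R * epsilon (th (binom_seq a k)) * epsilon (ph (binom_seq a (n - k))).
Proof.
move=> a0 _ th_lin ph_lin _ ph_shift.
rewrite shift_invariant_binom_seqE //.
pose c k := 'C(n, k)%:R * epsilon (ph (binom_seq a (n - k))).
rewrite (linear_binom_seq_sum a n.+1 c th_lin) /epsilon.
by apply: eq_bigr => k _; rewrite mulrAC.
Qed.
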